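(* Let $k\geq 1$ be a fixed integer and let $P=P_1\star A_k\star P_2$ for arbitrary (possibly empty) finite posets $P_1,P_2$. Then there is a constant $c=c(P)$ such that for all integers $t\geq 2$ and all $n$ sufficiently large, $\mathrm{sat}^{\star}([t]^n,P)\leq (nt^2)^{c}$.
   Context: For positive integers $n,t$, $[n]=\{1,\dots,n\}$ and the hypergrid $[t]^n$ is the set of functions $f:[n]\to[t]$, partially ordered by $f\leq g$ iff $f(i)\leq g(i)$ for all $i\in[n]$. An induced copy of a poset $P$ in a family $\mathcal{F}\subseteq[t]^n$ is an injective map $\phi:P\to\mathcal{F}$ such that $\phi(x)\leq\phi(y)$ iff $x\leq_P y$. A family $\mathcal{F}\subseteq[t]^n$ is induced $P$-free if it contains no induced copy of $P$; it is induced $P$-saturated if it is induced $P$-free and for every $f\in[t]^n\setminus\mathcal{F}$ the family $\mathcal{F}\cup\{f\}$ contains an induced copy of $P$. Whenever $P$ embeds as an induced subposet of $[t]^n$, $\mathrm{sat}^{\star}([t]^n,P)$ denotes the minimum size of an induced $P$-saturated family in $[t]^n$. $A_k$ is the antichain on $k$ elements. For posets $P,Q$, the poset sum $P\star Q$ is the disjoint union of $P$ and $Q$ with relations added so that every element of $P$ lies below every element of $Q$; $\star$ is associative. *)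

From mathcomp Require Import all_boot.
Set Implicit Arguments. Unset Strict Implicit. Unset Printing Implicit Defensive.

Definition is_partial_order (T : finType) (le : rel T) : Prop :=
  [/\ reflexive le, antisymmetric le & transitive le].

Definition antichain_le (k : nat) : rel 'I_k := fun x y => x == y.

Definition star_le (T1 T2 : finType) (le1 : rel T1) (le2 : rel T2)
  : rel (T1 + T2)%type :=
  fun u v =>
    match u, v with
    | inl x, inl y => le1 x y
    | inr x, inr y => le2 x y
    | inl _, inr _ => true
    | inr _, inl _ => false
    end.

(* The hypergrid [t]^n: functions [n] -> [t], encoded as {ffun 'I_n -> 'I_t}
   (values 0..t-1 instead of 1..t), ordered pointwise. *)
Definition grid (n t : nat) := {ffun 'I_n -> 'I_t}.

Definition grid_le (n t : nat) (f g : grid n t) : bool :=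
  [forall i, (f i <= g i)%N].

Definition induced_copy (T : finType) (le : rel T) (n t : nat)
  (F : {set grid n t}) (phi : {ffun T -> grid n t}) : bool :=
  [&& injectiveb phi, [forall x, phi x \in F] &
      [forall x, forall y, grid_le (phi x) (phi y) == le x y]].

Definition induced_free (T : finType) (le : rel T) (n t : nat)
  (F : {set grid n t}) : bool :=
  ~~ [exists phi : {ffun T -> grid n t}, induced_copy le F phi].

Definition induced_saturated (T : finType) (le : rel T) (n t : nat)
  (F : {set grid n t}) : bool :=
  induced_free le F &&
  [forall f : grid n t, (f \notin F) ==>
     [exists phi : {ffun T -> grid n t}, induced_copy le (f |: F) phi]].

Definition embeds (T : finType) (le : rel T) (n t : nat) : bool :=
  [exists phi : {ffun T -> grid n t}, induced_copy le [set: grid n t] phi].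

(* sat*([t]^n, P): minimum size of an induced P-saturated family.
   (The default #|grid n t| is an upper bound for any family size, so this
   is the true minimum whenever a saturated family exists.) *)
Definition sat_star (T : finType) (le : rel T) (n t : nat) : nat :=
  \big[minn/#|{: grid n t}|]_(F : {set grid n t} | induced_saturated le F) #|F|.

From mathcomp Require Import all_boot zify.
Set Implicit Arguments. Unset Strict Implicit. Unset Printing Implicit Defensive.

(* Write t = tp.+1 and P = P1 * A_k * P2.  A P-free family G = L :|: C :|: U of polynomial
   size is built from three layers.  L encodes P1 by 0/1 points: y goes to the indicator of an
   injective image of code y, the down-set of y padded to (#|P1|+1) * height y elements, so that
   codes are ordered like P1 and ranks are multiples of #|P1|+1 fixed by heights, which leaves no
   room for a copy of P1 in L strictly below a point of L.  U is the complement of the same layer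
   for the dual of P2.
   C holds the points equal to tp exactly on {j} :|: [k-1, m) with j < k-1, whose antichains have
   at most k-1 elements.  Ranks separate the layers and force the antichain of any copy of P in G
   into C, so G is P-free.
   A point f differing from every two-valued step function in more than k + 2s coordinates has a
   cut m with s coordinates of [k-1, m) where f > 0 and s coordinates of [m, n) where f < tp;
   then f and the k-1 points of C with cut m form an antichain, with a copy of P1 in L below it
   supported on the former coordinates and a copy of P2 in U above it on the latter.  Hence a
   maximal P-free family between G and G :|: Z, with Z the polynomially many points near step
   functions, is saturated. *)

Definition seg (n lo hi : nat) : {set 'I_n} := [set i : 'I_n | lo <= i < hi].

Lemma mem_seg n lo hi (i : 'I_n) : (i \in seg n lo hi) = (lo <= i < hi).
Proof. by rewrite inE. Qed.

Lemma card_seg n lo hi : hi <= n -> #|seg n lo hi| = hi - lo.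
Proof.
move=> hi_n; have [lo_hi|hi_lo] := leqP lo hi; last first.
  rewrite (_ : hi - lo = 0); last by lia.
  by apply/eqP; rewrite cards_eq0; apply/eqP/setP => i; rewrite !inE; lia.
rewrite -(subnK lo_hi) addnK in hi_n *; elim: (hi - lo) hi_n => [|d IH] hd.
  by apply/eqP; rewrite cards_eq0; apply/eqP/setP => i; rewrite !inE; lia.
have hd' : d + lo < n by lia.
have -> : seg n lo (d.+1 + lo) = Ordinal hd' |: seg n lo (d + lo).
  by apply/setP => i; rewrite !inE -val_eqE /=; lia.
by rewrite cardsU1 IH ?inE /=; lia.
Qed.

Lemma card_sum_set (A B : finType) (S : {set A + B}) :
  #|S| = #|[set x | inl x \in S]| + #|[set y | inr y \in S]|.
Proof. by rewrite -!sum1_card big_sumType; congr (_ + _); apply: eq_bigl => x; rewrite inE. Qed.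

Lemma subset_imset_inj (aT rT : finType) (f : aT -> rT) (A B : {set aT}) :
  injective f -> (f @: A \subset f @: B) = (A \subset B).
Proof.
move=> f_inj; apply/idP/idP => [/subsetP sub|/imsetS //].
by apply/subsetP => x xA; have := sub (f x); rewrite !mem_imset //; apply.
Qed.

Lemma leq_card_seg n lo hi : #|seg n lo hi| <= hi - lo.
Proof.
have [hi_n|n_hi] := leqP hi n; first by rewrite card_seg.
rewrite (_ : seg n lo hi = seg n lo n) ?card_seg //; first lia.
by apply/setP => i; rewrite !inE; have := ltn_ord i; lia.
Qed.

Lemma leq_card_sep (T : finType) (A : {set T}) (P : pred T) : #|[set x in A | P x]| <= #|A|.
Proof. by apply/subset_leq_card/subsetP => x; rewrite inE => /andP []. Qed.

Lemma leq_card_subsetU4 (T : finType) (A B C D E : {set T}) :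
  A \subset B :|: C :|: D :|: E -> #|A| <= #|B| + #|C| + #|D| + #|E|.
Proof. by move/subset_leq_card; rewrite !cardsU; lia. Qed.

Lemma exists_injection (X : finType) n (I : {set 'I_n}) :
  #|X| <= #|I| -> exists h : {ffun X -> 'I_n}, injective h /\ forall u, h u \in I.
Proof.
move=> le_XI; exists [ffun u => enum_val (widen_ord le_XI (enum_rank u))]; split.
  by move=> u v; rewrite !ffunE => /enum_val_inj /(congr1 val) /= /val_inj /enum_rank_inj.
by move=> u; rewrite ffunE enum_valP.
Qed.

Section Grid.

Variables n tp : nat.
Local Notation grid := (grid n tp.+1).

Lemma grid_leP (f g : grid) : reflect (forall i, f i <= g i) (grid_le f g).
Proof. exact: forallP. Qed.

Lemma grid_le_refl : reflexive (@grid_le n tp.+1).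
Proof. by move=> f; apply/grid_leP. Qed.

Lemma grid_le_trans : transitive (@grid_le n tp.+1).
Proof. by move=> g f h /grid_leP fg /grid_leP gh; apply/grid_leP => i; apply: leq_trans (gh i). Qed.

Definition rank (g : grid) : nat := \sum_(i < n) (g i : nat).

Lemma leq_rank (f g : grid) : grid_le f g -> rank f <= rank g.
Proof. by move/grid_leP => fg; apply: leq_sum => i _. Qed.

Lemma ltn_rank (f g : grid) : grid_le f g -> f != g -> rank f < rank g.
Proof.
move=> /grid_leP fg; apply: contraNT; rewrite -leqNgt => gf.
have [i fgi|] := pickP (fun i => f i < g i); last first.
  move=> eq_fg; apply/eqP/ffunP => i; apply/val_inj/eqP.
  by rewrite eqn_leq fg leqNgt eq_fg.
rewrite /rank (bigD1 i) // [X in _ <= X](bigD1 i) //= in gf.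
have sum_fg : \sum_(j < n | j != i) (f j : nat) <= \sum_(j < n | j != i) (g j : nat).
  by apply: leq_sum => j _.
by have := leq_add fgi sum_fg; rewrite addSn ltnNge gf.
Qed.

Definition compl (g : grid) : grid := [ffun i => rev_ord (g i)].

Lemma complE (g : grid) i : compl g i = tp - g i :> nat.
Proof. by rewrite ffunE /= subSS. Qed.

Lemma complK : involutive compl.
Proof.
by move=> g; apply/ffunP => i; apply/val_inj; rewrite /= !complE; have := ltn_ord (g i); lia.
Qed.

Lemma grid_le_compl (f g : grid) : grid_le (compl f) (compl g) = grid_le g f.
Proof.
apply/grid_leP/grid_leP => fg i; have := fg i; rewrite ?complE;
  have := ltn_ord (f i); have := ltn_ord (g i); lia.
Qed.

Lemma grid_le_complr (f g : grid) : (forall i, f i + g i <= tp) -> grid_le f (compl g).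
Proof. by move=> fg; apply/grid_leP => i; rewrite complE; have := fg i; lia. Qed.

Lemma rank_compl (g : grid) : rank (compl g) = n * tp - rank g.
Proof.
apply/eqP; rewrite -(eqn_add2r (rank g)) subnK; last first.
  by rewrite -[n in n * _]card_ord -sum_nat_const; apply: leq_sum => i _; rewrite -ltnS.
rewrite -big_split -[n in n * _]card_ord -sum_nat_const /=; apply/eqP/eq_bigr => i _.
by rewrite complE subnK // -ltnS.
Qed.

Definition indic (h : 'I_tp.+1) (B : {set 'I_n}) : grid :=
  [ffun i => if i \in B then h else ord0].

Lemma rank_indic h B : rank (indic h B) = #|B| * h.
Proof.
rewrite /rank (eq_bigr (fun i => if i \in B then h : nat else 0)) => [|i _].
  by rewrite -big_mkcond sum_nat_const.
by rewrite ffunE; case: (i \in B).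
Qed.

Lemma grid_le_indicl (h : 'I_tp.+1) (B : {set 'I_n}) (g : grid) :
  (forall i, i \in B -> h <= g i) -> grid_le (indic h B) g.
Proof. by move=> hB; apply/grid_leP => i; rewrite ffunE; case: ifP => // /hB. Qed.

Lemma grid_le_indic (h : 'I_tp.+1) (A B : {set 'I_n}) :
  0 < h -> grid_le (indic h A) (indic h B) = (A \subset B).
Proof.
move=> h_gt0; apply/grid_leP/subsetP => [AB i iA|AB i].
  by have := AB i; rewrite !ffunE iA; case: ifP; rewrite // leqNgt h_gt0.
by rewrite !ffunE; case: ifP => // /AB ->.
Qed.

End Grid.

Definition sum_case (A B C : Type) (a : A -> C) (b : B -> C) (u : A + B) : C :=
  match u with inl x => a x | inr y => b y end.

Lemma star_anti (T1 T2 : finType) (le1 : rel T1) (le2 : rel T2) :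
  antisymmetric le1 -> antisymmetric le2 -> antisymmetric (star_le le1 le2).
Proof. by move=> anti1 anti2 [x|x] [y|y] //= => [/anti1 | /anti2] ->. Qed.

Lemma antichain_anti k : antisymmetric (@antichain_le k).
Proof. by move=> x y /andP [/eqP]. Qed.

Section Copies.

Variables (n tp : nat) (T : finType) (le : rel T).

Lemma induced_copy_mono (F : {set grid n tp.+1}) (phi : {ffun T -> grid n tp.+1}) :
  induced_copy le F phi -> {mono phi : x y / le x y >-> grid_le x y}.
Proof. by case/and3P => _ _ /forallP le_phi x y; have /forallP/(_ y)/eqP := le_phi x. Qed.

Lemma mono_induced_copy (F : {set grid n tp.+1}) (phi : T -> grid n tp.+1) :
  antisymmetric le -> {mono phi : x y / le x y >-> grid_le x y} -> (forall x, phi x \in F) ->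
  induced_copy le F [ffun x => phi x].
Proof.
move=> le_anti phi_mono phiF; apply/and3P; split.
- apply/injectiveP => x y; rewrite !ffunE => phi_xy.
  by apply: le_anti; rewrite -!phi_mono phi_xy grid_le_refl.
- by apply/forallP => x; rewrite ffunE.
- by apply/forallP => x; apply/forallP => y; rewrite !ffunE phi_mono.
Qed.

Lemma star_mono (T' : finType) (le' : rel T') (a : T -> grid n tp.+1) (b : T' -> grid n tp.+1) :
  {mono a : x y / le x y >-> grid_le x y} -> {mono b : x y / le' x y >-> grid_le x y} ->
  (forall x y, grid_le (a x) (b y)) -> (forall x y, rank (a x) < rank (b y)) ->
  {mono sum_case a b : u v / star_le le le' u v >-> grid_le u v}.
Proof.
move=> a_mono b_mono ab rank_ab [x|y] [x'|y'] /=; rewrite ?a_mono ?b_mono ?ab //.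
by apply/negbTE/negP => /leq_rank; rewrite leqNgt rank_ab.
Qed.

End Copies.

Section SaturatedFamilies.

Variables (T : finType) (le : rel T) (n t : nat).

Lemma induced_copyS (A B : {set grid n t}) (phi : {ffun T -> grid n t}) :
  A \subset B -> induced_copy le A phi -> induced_copy le B phi.
Proof.
move=> /subsetP AB /and3P [phi_inj /forallP phiA phi_le]; apply/and3P; split=> //.
by apply/forallP => x; apply: AB.
Qed.

(* A maximal free family between G and G :|: Z is saturated. *)
Lemma exists_saturated (G Z : {set grid n t}) :
  induced_free le G ->
  (forall g, g \notin G :|: Z -> exists phi, induced_copy le (g |: G) phi) ->
  exists2 F : {set grid n t}, induced_saturated le F & #|F| <= #|G :|: Z|.
Proof.
move=> G_free G_sat.
pose ok (F : {set grid n t}) := [&& G \subset F, F \subset G :|: Z & induced_free le F].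
have okG : ok G by rewrite /ok subxx subsetUl G_free.
have [F /and3P [GF FGZ F_free] F_max] := arg_maxnP (fun F : {set grid n t} => #|F|) okG.
exists F; last exact: subset_leq_card.
rewrite /induced_saturated F_free; apply/forall_inP => g gF.
have [gGZ|gGZ] := boolP (g \in G :|: Z).
  have : ~~ ok (g |: F) by apply/negP => /F_max; rewrite cardsU1 gF; lia.
  by rewrite /ok (subset_trans GF (subsetUr _ _)) subUset sub1set gGZ FGZ /induced_free negbK.
have [phi copy] := G_sat g gGZ; apply/existsP; exists phi.
by apply: induced_copyS copy; apply: setUS.
Qed.

Lemma sat_star_leq (F : {set grid n t}) : induced_saturated le F -> sat_star le n t <= #|F|.
Proof.
rewrite /sat_star => F_sat; elim: (index_enum _) (mem_index_enum F) => // F' r IH.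
rewrite inE big_cons => /predU1P [<-|Fr]; first by rewrite F_sat geq_minl.
by case: ifP => _; [apply: leq_trans (geq_minr _ _) (IH Fr) | apply: IH].
Qed.

End SaturatedFamilies.

Section Coding.

Variables (T : finType) (le : rel T).
Hypothesis le_po : is_partial_order le.

Let le_refl : reflexive le. Proof. by case: le_po. Qed.
Let le_anti : antisymmetric le. Proof. by case: le_po. Qed.
Let le_trans : transitive le. Proof. by case: le_po. Qed.

Definition chain (A : {set T}) : bool := [forall x in A, forall y in A, le x y || le y x].

Definition downset (y : T) : {set T} := [set x | le x y].

Definition chain_below (y : T) (A : {set T}) : bool := chain A && (A \subset downset y).

Definition height (y : T) : nat := \max_(A | chain_below y A) #|A|.

Lemma chain_belowU1 A y : chain A -> A \subset downset y -> chain_below y (y |: A).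
Proof.
move=> /forall_inP chA sAy; have Ay := subsetP sAy.
rewrite /chain_below subUset sub1set inE le_refl sAy /= andbT.
apply/forall_inP => x /setU1P x_yA; apply/forall_inP => z /setU1P z_yA.
case: x_yA z_yA => [->|xA] [->|zA]; rewrite ?le_refl //.
- by have := Ay z zA; rewrite inE => ->; rewrite orbT.
- by have := Ay x xA; rewrite inE => ->.
- by have /forall_inP := chA x xA; apply.
Qed.

Lemma chain_below1 y : chain_below y [set y].
Proof.
by rewrite -[[set y]]setU0 chain_belowU1 ?sub0set //; apply/forall_inP => x; rewrite inE.
Qed.

Lemma height_chain y : exists2 A, chain_below y A & #|A| = height y.
Proof.
have [|A PA hA] := @eq_bigmax_cond _ (chain_below y) (fun A => #|A|).
  by apply/card_gt0P; exists [set y]; apply: chain_below1.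
by exists A; rewrite // /height hA.
Qed.

Lemma height_gt0 y : 0 < height y.
Proof.
by have := @leq_bigmax_cond _ _ (fun A : {set T} => #|A|) _ (chain_below1 y); rewrite cards1.
Qed.

Lemma height_leq_card y : height y <= #|T|.
Proof. by apply/bigmax_leqP => A _; apply: max_card. Qed.

Lemma height_lt y y' : le y y' -> y != y' -> height y < height y'.
Proof.
move=> yy' ne_yy'; have [A /andP [chA Ay] <-] := height_chain y.
have Ay' : A \subset downset y'.
  by apply/subsetP => x /(subsetP Ay); rewrite !inE => /le_trans; apply.
have y'A : y' \notin A.
  apply: contra ne_yy' => /(subsetP Ay); rewrite inE => y'y.
  by apply/eqP/le_anti; rewrite yy'.
apply: leq_trans (@leq_bigmax_cond _ _ (fun A : {set T} => #|A|) _ (chain_belowU1 chA Ay')).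
by rewrite cardsU1 y'A.
Qed.

Definition ground : finType := (T + 'I_(#|T|.+1 * #|T|))%type.

Definition pad (y : T) : nat := #|T|.+1 * height y - #|downset y|.

Definition code (y : T) : {set ground} :=
  [set u : ground | match u with inl x => le x y | inr q => q < pad y end].

Lemma card_downset_leq y : #|downset y| <= #|T|.+1 * height y.
Proof. by have := max_card (downset y); have := height_gt0 y; nia. Qed.

Lemma card_code y : #|code y| = #|T|.+1 * height y.
Proof.
rewrite card_sum_set (_ : [set x | inl x \in code y] = downset y); last first.
  by apply/setP => x; rewrite !inE.
rewrite (_ : [set q | inr q \in code y] = seg _ 0 (pad y)); last by apply/setP => q; rewrite !inE.
rewrite card_seg ?subn0 /pad ?subnKC ?card_downset_leq //.
by apply: leq_trans (leq_subr _ _) _; rewrite leq_mul2l height_leq_card.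
Qed.

Lemma pad_mono y y' : le y y' -> pad y <= pad y'.
Proof.
have [<- //|ne_yy' yy'] := eqVneq y y'.
have := height_lt yy' ne_yy'; have := max_card (downset y'); rewrite /pad; nia.
Qed.

Lemma code_subset y y' : (code y \subset code y') = le y y'.
Proof.
apply/subsetP/idP => [sub|yy' [x|q]]; first by have := sub (inl y); rewrite !inE le_refl; apply.
  by rewrite !inE => /le_trans; apply.
by rewrite !inE => /leq_trans; apply; apply: pad_mono.
Qed.

End Coding.

Definition rank_bound (T : finType) : nat := #|T|.+1 * #|T|.

Lemma card_ground (T : finType) : #|ground T| = #|T| + rank_bound T.
Proof. by rewrite card_sum card_ord. Qed.

Section LowerFamily.

Variables (T : finType) (le : rel T) (n tp : nat).
Hypotheses (le_po : is_partial_order le) (tp_gt0 : 0 < tp).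

Definition embed (h : {ffun ground T -> 'I_n}) (y : T) : grid n tp.+1 :=
  indic (inord 1) (h @: code le y).

Definition Lset : {set grid n tp.+1} :=
  [set embed p.1 p.2 | p in [set p : {ffun ground T -> 'I_n} * T | injectiveb p.1]].

Let le_anti : antisymmetric le. Proof. by case: le_po. Qed.

Let inord1 : (inord 1 : 'I_tp.+1) = 1 :> nat.
Proof. by rewrite inordK. Qed.

Lemma grid_le_embed (h : {ffun ground T -> 'I_n}) y y' :
  injective h -> grid_le (embed h y) (embed h y') = le y y'.
Proof. by move=> h_inj; rewrite grid_le_indic ?inord1 // subset_imset_inj // code_subset. Qed.

Lemma rank_embed (h : {ffun ground T -> 'I_n}) y :
  injective h -> rank (embed h y) = #|T|.+1 * height le y.
Proof. by move=> h_inj; rewrite rank_indic card_imset // card_code // inord1 muln1. Qed.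

Lemma embed_Lset (h : {ffun ground T -> 'I_n}) y : injective h -> embed h y \in Lset.
Proof. by move=> h_inj; apply/imsetP; exists (h, y); rewrite // inE; apply/injectiveP. Qed.

Lemma rank_Lset x : x \in Lset -> exists y, rank x = #|T|.+1 * height le y.
Proof.
by case/imsetP => [[h y]]; rewrite inE => /injectiveP h_inj ->; exists y; apply: rank_embed.
Qed.

Lemma rank_Lset_leq x : x \in Lset -> rank x <= rank_bound T.
Proof. by case/rank_Lset => y ->; rewrite leq_mul2l height_leq_card orbT. Qed.

Lemma card_Lset : #|Lset| <= n ^ #|ground T| * #|T|.
Proof.
apply: leq_trans (leq_imset_card _ _) _; apply: leq_trans (max_card _) _.
by rewrite card_prod card_ffun card_ord.
Qed.

(* A copy of (T, le) strictly below x would contain a chain of height y elements with distinct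
   ranks, all multiples of #|T|.+1 smaller than rank x = #|T|.+1 * height y. *)
Lemma Lset_no_copy_below x (psi : T -> grid n tp.+1) :
  x \in Lset -> {mono psi : u v / le u v >-> grid_le u v} -> (forall u, psi u \in Lset) ->
  ~ (forall u, grid_le (psi u) x && (psi u != x)).
Proof.
move=> xL psi_mono psiL psi_lt; have [y rank_x] := rank_Lset xL.
have [A /andP [/forall_inP chA _] cardA] := height_chain le_po y.
have psi_inj : injective psi.
  by move=> u v psi_uv; apply: le_anti; rewrite -!psi_mono psi_uv grid_le_refl.
have rank_inj : {in A &, injective (fun u => rank (psi u))}.
  move=> u v uA vA /= eq_r; apply: contra_eq eq_r => ne_uv.
  have ne_psi : psi u != psi v by rewrite (inj_eq psi_inj).
  move: (chA u uA) => /forall_inP /(_ v vA) /orP [] le_uv.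
    by rewrite neq_ltn ltn_rank ?psi_mono.
  by rewrite neq_ltn (ltn_rank (f := psi v)) ?psi_mono ?orbT // eq_sym.
have sub : {subset [seq rank (psi u) | u <- enum A]
               <= [seq #|T|.+1 * j | j <- iota 1 (height le y).-1]}.
  move=> _ /mapP [u _ ->]; have [y' rank_u] := rank_Lset (psiL u).
  have /andP [le_ux ne_ux] := psi_lt u; have := ltn_rank le_ux ne_ux.
  rewrite rank_u rank_x ltn_mul2l /= => lt_y'y; apply: map_f.
  by rewrite mem_iota height_gt0 //=; lia.
have := uniq_leq_size _ sub; rewrite map_inj_in_uniq ?enum_uniq; last first.
  by move=> u v; rewrite !mem_enum; apply: rank_inj.
by rewrite !size_map size_iota -cardE cardA; have := height_gt0 le_po y; lia.
Qed.

Lemma grid_le_embedl (h : {ffun ground T -> 'I_n}) y (g : grid n tp.+1) :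
  (forall u, 0 < g (h u)) -> grid_le (embed h y) g.
Proof. by move=> g_pos; apply: grid_le_indicl => _ /imsetP [u _ ->]; rewrite inord1. Qed.

Lemma grid_le_compl_embedr (h : {ffun ground T -> 'I_n}) y (g : grid n tp.+1) :
  (forall u, g (h u) < tp) -> grid_le g (compl (embed h y)).
Proof.
move=> g_low; apply: grid_le_complr => i; rewrite ffunE; case: ifP => [/imsetP [u _ ->]|_].
  by rewrite inord1 addn1.
by rewrite addn0 -ltnS.
Qed.

End LowerFamily.

Definition dual (T : Type) (le : rel T) : rel T := fun x y => le y x.

Lemma dual_po (T : finType) (le : rel T) : is_partial_order le -> is_partial_order (dual le).
Proof.
case=> le_refl le_anti le_trans; split=> [x|x y|y x z xy yz]; rewrite /dual.
- exact: le_refl.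
- by rewrite andbC; apply: le_anti.
- exact: le_trans yz xy.
Qed.

Section UpperFamily.

Variables (T : finType) (le : rel T) (n tp : nat).
Hypotheses (le_po : is_partial_order le) (tp_gt0 : 0 < tp).

Definition Uset : {set grid n tp.+1} := @compl n tp @: Lset (dual le) n tp.

Lemma mem_Uset x : (x \in Uset) = (compl x \in Lset (dual le) n tp).
Proof. by rewrite -[x in LHS]complK mem_imset //; apply: can_inj (@complK n tp). Qed.

Lemma rank_Uset_geq x : x \in Uset -> n * tp <= rank x + rank_bound T.
Proof.
rewrite mem_Uset => /(rank_Lset_leq (dual_po le_po) tp_gt0).
by rewrite rank_compl; lia.
Qed.

Lemma card_Uset : #|Uset| <= n ^ #|ground T| * #|T|.
Proof. exact: leq_trans (leq_imset_card _ _) (card_Lset _ _ _). Qed.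

Lemma Uset_no_copy_above x (psi : T -> grid n tp.+1) :
  x \in Uset -> {mono psi : u v / le u v >-> grid_le u v} -> (forall u, psi u \in Uset) ->
  ~ (forall u, grid_le x (psi u) && (x != psi u)).
Proof.
rewrite mem_Uset => xL psi_mono psiU psi_gt.
apply: (Lset_no_copy_below (dual_po le_po) tp_gt0 xL (psi := fun u => compl (psi u))).
- by move=> u v; rewrite grid_le_compl psi_mono.
- by move=> u; rewrite -mem_Uset.
- by move=> u; rewrite grid_le_compl (inj_eq (can_inj (@complK n tp))) eq_sym.
Qed.

Lemma compl_embed_Uset (h : {ffun ground T -> 'I_n}) y :
  injective h -> compl (embed (dual le) tp h y) \in Uset.
Proof. by move=> h_inj; rewrite mem_Uset complK embed_Lset. Qed.

End UpperFamily.

Section MiddleFamily.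

Variables (n tp k s : nat).
Hypothesis tp_gt0 : 0 < tp.

Definition cset (j m : nat) : {set 'I_n} := [set i : 'I_n | (i == j :> nat) || (k.-1 <= i < m)].

Lemma mem_cset j m i : (i \in cset j m) = (i == j :> nat) || (k.-1 <= i < m).
Proof. by rewrite inE. Qed.

Definition cvec (j m : nat) : grid n tp.+1 := indic ord_max (cset j m).

Definition Cset : {set grid n tp.+1} :=
  [set cvec p.1 p.2 | p : 'I_k.-1 * 'I_n.+1
                      in [set p : 'I_k.-1 * 'I_n.+1 | (k.-1 + s <= p.2) && (p.2 + s <= n)]].

Lemma rank_cvec j m : j < k.-1 -> k.-1 + s <= m -> m + s <= n ->
  s <= rank (cvec j m) /\ rank (cvec j m) + s <= n * tp.
Proof.
move=> j_k km mn; rewrite rank_indic.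
have : seg n k.-1 m \subset cset j m by apply/subsetP => i; rewrite !inE => ->; rewrite orbT.
move/subset_leq_card; rewrite card_seg; last by lia.
have : cset j m \subset seg n 0 m by apply/subsetP => i; rewrite !inE; lia.
move/subset_leq_card; rewrite card_seg; last by lia.
rewrite /=; split; nia.
Qed.

Lemma rank_Cset x : x \in Cset -> s <= rank x /\ rank x + s <= n * tp.
Proof. by case/imsetP=> [[j m]]; rewrite inE /= => /andP [km mn] ->; apply: rank_cvec. Qed.

Lemma cvec_mono j m m' : m <= m' -> grid_le (cvec j m) (cvec j m').
Proof. by move=> mm'; rewrite grid_le_indic //; apply/subsetP => i; rewrite !inE; lia. Qed.

Lemma cvec_incomp j j' m m' : j < k.-1 -> j < n -> j != j' -> ~~ grid_le (cvec j m) (cvec j' m').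
Proof.
move=> j_k j_n ne_jj'; rewrite grid_le_indic //; apply/subsetPn; exists (Ordinal j_n).
  by rewrite inE eqxx.
by rewrite inE /= (negbTE ne_jj'); lia.
Qed.

Lemma Cset_antichain (I : finType) (b : I -> grid n tp.+1) :
  (forall i, b i \in Cset) -> (forall i i', grid_le (b i) (b i') -> i = i') -> #|I| <= k.-1.
Proof.
move=> bC b_anti.
have [p b_p] : exists p : I -> 'I_k.-1 * 'I_n.+1, forall i, b i = cvec (p i).1 (p i).2.
  apply: (@fin_all_exists _ (fun _ => _) (fun i (p : 'I_k.-1 * 'I_n.+1) => b i = cvec p.1 p.2))
    => i.
  by case/imsetP: (bC i) => p _ ->; exists p.
have := leq_card (fun i => (p i).1); rewrite card_ord; apply => i i' eq_p.
have [le_m|/ltnW le_m] := leqP (p i).2 (p i').2; [apply: b_anti | apply/esym/b_anti];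
  by rewrite !b_p eq_p cvec_mono.
Qed.

Lemma card_Cset : #|Cset| <= k.-1 * n.+1.
Proof.
apply: leq_trans (leq_imset_card _ _) _; apply: leq_trans (max_card _) _.
by rewrite card_prod !card_ord.
Qed.

End MiddleFamily.

Section FreeFamily.

Variables (T1 : finType) (le1 : rel T1) (T2 : finType) (le2 : rel T2) (n tp k s : nat).
Hypotheses (le1_po : is_partial_order le1) (le2_po : is_partial_order le2).
Hypotheses (tp_gt0 : 0 < tp) (k_gt0 : 0 < k).
Hypotheses (R1_s : rank_bound T1 < s) (R2_s : rank_bound T2 < s).
Hypothesis R_n : rank_bound T1 + rank_bound T2 < n.

Definition Gset : {set grid n tp.+1} := Lset le1 n tp :|: Cset n tp k s :|: Uset le2 n tp.

Let n_ntp : n <= n * tp. Proof. by rewrite leq_pmulr. Qed.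

Lemma Gset_low x : x \in Gset -> rank x <= rank_bound T1 -> x \in Lset le1 n tp.
Proof.
rewrite !in_setU -orbA => /or3P [//|/(rank_Cset tp_gt0) [+ _]|/(rank_Uset_geq le2_po tp_gt0)]; lia.
Qed.

Lemma Gset_high x : x \in Gset -> n * tp <= rank x + rank_bound T2 -> x \in Uset le2 n tp.
Proof.
rewrite !in_setU -orbA => /or3P [/(rank_Lset_leq le1_po tp_gt0)|/(rank_Cset tp_gt0) [_ +]|//]; lia.
Qed.

Lemma Gset_free : induced_free (star_le le1 (star_le (@antichain_le k) le2)) Gset.
Proof.
apply/existsP => -[phi copy]; have phi_mono := induced_copy_mono copy.
have /and3P [/injectiveP phi_inj /forallP phiG _] := copy.
have lt_phi u v : star_le le1 (star_le (@antichain_le k) le2) u v -> u != v ->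
    rank (phi u) < rank (phi v).
  by move=> uv ne_uv; rewrite ltn_rank ?phi_mono // (inj_eq phi_inj).
have midC i : phi (inr (inl i)) \in Cset n tp k s.
  have := phiG (inr (inl i)); rewrite !in_setU -orbA => /or3P [xL|//|xU].
    case: (Lset_no_copy_below le1_po tp_gt0 xL (psi := fun u => phi (inl u))) => [u v|u|u].
    - by rewrite phi_mono.
    - apply: Gset_low (phiG _) (leq_trans (ltnW _) (rank_Lset_leq le1_po tp_gt0 xL)).
      exact: lt_phi (inl u) (inr (inl i)) isT isT.
    - by rewrite phi_mono (inj_eq phi_inj).
  case: (Uset_no_copy_above le2_po tp_gt0 xU (psi := fun z => phi (inr (inr z)))) => [z z'|z|z].
  - by rewrite phi_mono.
  - apply: Gset_high (phiG _) (leq_trans (rank_Uset_geq le2_po tp_gt0 xU) _).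
    by rewrite leq_add2r ltnW // (lt_phi (inr (inl i)) (inr (inr z))).
  - by rewrite phi_mono (inj_eq phi_inj).
suff : k <= k.-1 by lia.
rewrite -[k in k <= _]card_ord.
apply: (Cset_antichain tp_gt0 (b := fun i => phi (inr (inl i)))) => // i i'.
by rewrite phi_mono => /eqP.
Qed.

End FreeFamily.

Section NearStepFunctions.

Variables n tp K : nat.

Definition step (u w : 'I_tp.+1) (p : nat) : grid n tp.+1 :=
  [ffun i : 'I_n => if i < p then u else w].

Definition near_steps : {set grid n tp.+1} :=
  [set f : grid n tp.+1 | [exists d : 'I_tp.+1 * 'I_tp.+1 * 'I_n.+1,
              #|[set i | f i != step d.1.1 d.1.2 d.2 i]| <= K]].

Lemma card_near_steps : 0 < n -> #|near_steps| <= tp.+1 * tp.+1 * n.+1 * (n ^ K * tp.+1 ^ K).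
Proof.
move=> n_gt0.
pose E := (('I_tp.+1 * 'I_tp.+1 * 'I_n.+1) * ({ffun 'I_K -> 'I_n} * {ffun 'I_K -> 'I_tp.+1}))%type.
pose patch (e : E) : grid n tp.+1 := [ffun i =>
  if [pick q | e.2.1 q == i] is Some q then e.2.2 q else step e.1.1.1 e.1.1.2 e.1.2 i].
apply: (@leq_trans #|patch @: setT|); last first.
  by apply: leq_trans (leq_imset_card _ _) _; rewrite cardsT !card_prod !card_ffun !card_ord.
apply/subset_leq_card/subsetP => f; rewrite inE => /existsP [[[u w] p] /= small_D].
set D := [set i | _] in small_D.
pose pos := [ffun q : 'I_K => nth (Ordinal n_gt0) (enum D) q].
apply/imsetP; exists ((u, w, p), (pos, [ffun q => f (pos q)])); rewrite ?inE //.
apply/ffunP => i; rewrite ffunE /=; case: pickP => [q /eqP <-|no_q]; first by rewrite !ffunE.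
apply/eqP; apply: contraT => ne_fi; have iD : i \in D by rewrite inE.
have lt_iK : index i (enum D) < K by apply: leq_trans small_D; rewrite cardE index_mem mem_enum.
by rewrite -(no_q (Ordinal lt_iK)) ffunE /= nth_index ?mem_enum.
Qed.

End NearStepFunctions.

Section Cut.

Variables (n tp k s : nat) (f : grid n tp.+1).
Hypotheses (s_gt0 : 0 < s) (k_n : k <= n).

Definition pos_part (m : nat) : {set 'I_n} := [set i in seg n k.-1 m | 0 < f i].

Definition nontop_part (m : nat) : {set 'I_n} := [set i in seg n m n | f i < tp].

Definition lower_ok (m : nat) : bool :=
  (s <= #|pos_part m|) && [exists i in seg n k.-1 m, f i < tp].

Definition upper_ok (m : nat) : bool :=
  (s <= #|nontop_part m|) && [exists i in seg n m n, 0 < f i].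

Lemma card_pos_part m : #|pos_part m| <= m - k.-1.
Proof. exact: leq_trans (leq_card_sep _ _) (leq_card_seg _ _ _). Qed.

Lemma card_nontop_part m : #|nontop_part m| <= n - m.
Proof. exact: leq_trans (leq_card_sep _ _) (leq_card_seg _ _ _). Qed.

Definition nearly (v : 'I_tp.+1) (I : {set 'I_n}) : bool := #|[set i in I | f i != v]| < s.

Let f_le i : f i <= tp. Proof. by rewrite -ltnS. Qed.

Lemma nearly_of_lower_fail m : ~~ lower_ok m -> exists v, nearly v (seg n k.-1 m).
Proof.
rewrite negb_and -ltnNge negb_exists => /orP [few_pos | /forallP all_top].
  exists ord0; apply: leq_ltn_trans few_pos.
  by apply/subset_leq_card/subsetP => i; rewrite !inE lt0n.
exists ord_max; rewrite /nearly (_ : [set i in _ | _] = set0) ?cards0 //.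
apply/setP => i; rewrite in_set in_set0; apply/negbTE.
apply: contra (all_top i) => /andP [-> ne_top].
by rewrite ltn_neqAle f_le andbT.
Qed.

Lemma nearly_of_upper_fail m : ~~ upper_ok m -> exists v, nearly v (seg n m n).
Proof.
rewrite negb_and -ltnNge negb_exists => /orP [few_low | /forallP all_zero].
  by exists ord_max; apply: leq_ltn_trans few_low; apply/subset_leq_card/subsetP => i;
     rewrite !inE => /andP [-> /= ne_top]; rewrite ltn_neqAle f_le andbT.
exists ord0; rewrite /nearly (_ : [set i in _ | _] = set0) ?cards0 //.
apply/setP => i; rewrite in_set in_set0; apply/negbTE.
apply: contra (all_zero i) => /andP [-> ne_zero].
by rewrite lt0n.
Qed.

Lemma nearly_small (v : 'I_tp.+1) (I : {set 'I_n}) : #|I| < s -> nearly v I.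
Proof. exact: leq_ltn_trans (leq_card_sep _ _). Qed.

Lemma near_steps_of_nearly (u w : 'I_tp.+1) (p : 'I_n.+1) :
  nearly u (seg n k.-1 p) -> nearly w (seg n p.+1 n) -> f \in near_steps n tp (k + 2 * s).
Proof.
move=> near_u near_w; rewrite inE; apply/existsP; exists (u, w, p) => /=.
set D := [set i | _]; move: near_u near_w; rewrite /nearly.
set Du := [set i in seg n k.-1 p | _]; set Dw := [set i in seg n p.+1 n | _] => near_u near_w.
have /leq_card_subsetU4 : D \subset seg n 0 k.-1 :|: seg n p p.+1 :|: Du :|: Dw.
  apply/subsetP => i; rewrite !inE ffunE; have := ltn_ord i.
  by case: ifP => i_p i_n ne; rewrite ne !andbT; lia.
move: near_u near_w (leq_card_seg n 0 k.-1) (leq_card_seg n p p.+1) (leq_pred k).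
by move: #|D| #|Du| #|Dw| #|seg n 0 k.-1| #|seg n p p.+1|; lia.
Qed.

(* Take the least m with lower_ok m: f is nearly constant on [k-1, m-1), so if upper_ok m
   failed, f would be near the step function with cut m-1. *)
Lemma exists_good_cut :
  f \notin near_steps n tp (k + 2 * s) -> exists m, [&& m <= n, lower_ok m & upper_ok m].
Proof.
move=> f_far; have ex_m : exists m, lower_ok m && (m <= n).
  exists n; rewrite leqnn andbT; apply: contraNT f_far => /nearly_of_lower_fail [v near_v].
  apply: (near_steps_of_nearly (w := v) (p := ord_max) near_v (nearly_small _ _)).
  by apply: leq_ltn_trans (leq_card_seg _ _ _) _; rewrite /=; lia.
case: (ex_minnP ex_m) => m0 /andP [lower_m0 m0_n] min_m0.
have m0_gt0 : 0 < m0.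
  by case: m0 lower_m0 {min_m0 m0_n} => // /andP [+ _]; have := card_pos_part 0; lia.
have lower_fail : ~~ lower_ok m0.-1.
  by apply/negP => lower_m; have := min_m0 m0.-1; rewrite lower_m /=; lia.
exists m0; rewrite m0_n lower_m0 /=; apply: contraNT f_far => /nearly_of_upper_fail [w near_w].
have [u near_u] := nearly_of_lower_fail lower_fail; have m0_n' : m0.-1 < n.+1 by lia.
by apply: (near_steps_of_nearly (w := w) (p := Ordinal m0_n') near_u); rewrite /= prednK.
Qed.

End Cut.

Section SaturatingCopy.

Variables (T1 : finType) (le1 : rel T1) (T2 : finType) (le2 : rel T2) (n tp k s : nat).
Variables (f : grid n tp.+1) (m : nat).
Hypotheses (le1_po : is_partial_order le1) (le2_po : is_partial_order le2).
Hypotheses (tp_gt0 : 0 < tp) (k_gt0 : 0 < k).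
Hypotheses (R1_s : rank_bound T1 < s) (R2_s : rank_bound T2 < s).
Hypotheses (X1_s : #|ground T1| <= s) (X2_s : #|ground T2| <= s).
Hypotheses (m_n : m <= n) (lower_m : lower_ok k s f m) (upper_m : upper_ok s f m).

Local Notation A := (pos_part k f m).
Local Notation B := (nontop_part f m).

Lemma rank_f : s <= rank f /\ rank f + s <= n * tp.
Proof.
have [sA _] := andP lower_m; have [sB _] := andP upper_m; split.
  have /leq_rank : grid_le (indic (inord 1) A) f.
    by apply: grid_le_indicl => i; rewrite inE inordK // => /andP [].
  by rewrite rank_indic inordK // muln1; apply: leq_trans.
have /leq_rank : grid_le f (compl (indic (inord 1) B)).
  apply: grid_le_complr => i; rewrite ffunE; case: ifP => [|_]; last by rewrite addn0 -ltnS.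
  by rewrite inE inordK // addn1 => /andP [].
rewrite rank_compl rank_indic inordK // muln1.
have := max_card B; rewrite card_ord; have : n <= n * tp by rewrite leq_pmulr.
lia.
Qed.

Let k_m : k.-1 + s <= m.
Proof.
by have [sA _] := andP lower_m; have := card_pos_part k f m; lia.
Qed.

Let m_s : m + s <= n.
Proof.
by have [sB _] := andP upper_m; have := card_nontop_part f m; lia.
Qed.

Definition mid (i : 'I_k) : grid n tp.+1 := if i == 0 :> nat then f else cvec n tp k i.-1 m.

Lemma mid_Cset (i : 'I_k) : i != 0 :> nat -> mid i \in Cset n tp k s.
Proof.
move=> i_gt0; have j_k : i.-1 < k.-1 by have := ltn_ord i; lia.
have m_n' : m < n.+1 by lia.
rewrite /mid (negbTE i_gt0); apply/imsetP.
by exists (Ordinal j_k, Ordinal m_n'); rewrite ?inE /= ?k_m ?m_s.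
Qed.

Lemma rank_mid i : s <= rank (mid i) /\ rank (mid i) + s <= n * tp.
Proof.
rewrite /mid; case: eqP => [_|i_gt0]; first exact: rank_f.
by apply: rank_cvec => //; have := ltn_ord i; lia.
Qed.

Lemma mid_mono : {mono mid : i i' / antichain_le i i' >-> grid_le i i'}.
Proof.
move=> i i'; rewrite /antichain_le; have [<-|ne_ii'] := eqVneq i i'; first exact: grid_le_refl.
apply/negbTE; rewrite /mid.
have /andP [_ /exists_inP [c c_seg c_top]] := lower_m.
have /andP [_ /exists_inP [d d_seg d_pos]] := upper_m.
case: eqP => [i0|i_gt0]; case: eqP => [i'0|i'_gt0].
- by case/eqP: ne_ii'; apply: val_inj; rewrite /= i0 i'0.
- apply/grid_leP => /(_ d); rewrite ffunE inE; move: d_seg; rewrite inE; have := ltn_ord i'.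
  by case: ifP => [/orP [/eqP|] | _ /=]; lia.
- apply/grid_leP => /(_ c); rewrite ffunE inE; move: c_seg; rewrite inE => /andP [-> ->].
  by rewrite orbT /=; lia.
- apply: cvec_incomp => //; first by have := ltn_ord i; lia.
    by have := ltn_ord i; lia.
  by apply: contra ne_ii' => /eqP eq_ii'; apply/eqP/val_inj; rewrite /=; lia.
Qed.

Lemma saturating_copy :
  exists phi, induced_copy (star_le le1 (star_le (@antichain_le k) le2))
                           (f |: Gset le1 le2 n tp k s) phi.
Proof.
have /andP [sA _] := lower_m; have /andP [sB _] := upper_m.
have [h1 [h1_inj h1A]] := exists_injection (leq_trans X1_s sA).
have [h2 [h2_inj h2B]] := exists_injection (leq_trans X2_s sB).
pose a y := embed le1 tp h1 y; pose c z := compl (embed (dual le2) tp h2 z).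
have a_mono : {mono a : y y' / le1 y y' >-> grid_le y y'} by move=> y y'; apply: grid_le_embed.
have c_mono : {mono c : z z' / le2 z z' >-> grid_le z z'}.
  by move=> z z'; rewrite grid_le_compl grid_le_embed //; apply: dual_po.
have mid_c i z : grid_le (mid i) (c z).
  apply: grid_le_compl_embedr => // u; have := h2B u; rewrite inE /mid => /andP [+ low].
  case: eqP => // _; rewrite ffunE mem_cset; have := ltn_ord i.
  by rewrite mem_seg; case: ifP => [/orP [/eqP|] | _ /=]; lia.
have a_mid y i : grid_le (a y) (mid i).
  apply: grid_le_embedl => // u; have := h1A u; rewrite inE /mid => /andP [+ pos].
  case: eqP => // _; rewrite ffunE mem_cset mem_seg => ->; rewrite orbT /=; lia.
have aL y : a y \in Lset le1 n tp by apply: embed_Lset.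
have cU z : c z \in Uset le2 n tp by apply: compl_embed_Uset.
have rank_a_mid y i : rank (a y) < rank (mid i).
  by have := rank_Lset_leq le1_po tp_gt0 (aL y); have [+ _] := rank_mid i; lia.
have rank_mid_c i z : rank (mid i) < rank (c z).
  by have := rank_Uset_geq le2_po tp_gt0 (cU z); have [_ +] := rank_mid i; lia.
pose i0 : 'I_k := Ordinal k_gt0.
exists [ffun u => sum_case a (sum_case mid c) u]; apply: mono_induced_copy.
- by apply: star_anti; [case: le1_po | apply: star_anti; [apply: antichain_anti | case: le2_po]].
- apply: (star_mono a_mono (star_mono mid_mono c_mono mid_c rank_mid_c)) => y [i|z] /=.
  + exact: a_mid.
  + exact: grid_le_trans (a_mid y i0) (mid_c i0 z).
  + exact: rank_a_mid.
  + exact: ltn_trans (rank_a_mid y i0) (rank_mid_c i0 z).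
- move=> [y|[i|z]] /=; rewrite in_setU1 !in_setU.
  + by rewrite aL orbT.
  + have [i_0|i_gt0] := eqVneq (i : nat) 0; first by rewrite /mid i_0 /= eqxx.
    by rewrite mid_Cset ?orbT.
  + by rewrite cU !orbT.
Qed.

End SaturatingCopy.

Lemma size_bound (n t a b k K c1 c2 : nat) :
  2 <= n -> 2 <= t -> c1 <= n -> c2 <= n -> k <= n ->
  n ^ a * c1 + k.-1 * n.+1 + n ^ b * c2 + t * t * n.+1 * (n ^ K * t ^ K)
    <= (n * t ^ 2) ^ (a + b + 2 * K + 4).
Proof.
move=> n_ge2 t_ge2 c1_n c2_n k_n; set x := n * t ^ 2.
have [n_x t_x x_ge4] : [/\ n.+1 <= x, t <= x & 4 <= x] by rewrite /x expnS expn1; split; nia.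
clearbody x; set E := a + b + 2 * K + 3.
have pow_base m e : m <= x -> m ^ e <= x ^ e by case: e => // e; rewrite leq_exp2r.
have pow_exp e e' : e <= e' -> x ^ e <= x ^ e' by apply: leq_pexp2l; lia.
have term c e : c <= n -> e.+1 <= E -> n ^ e * c <= x ^ E.
  move=> c_n e_E; apply: leq_trans (pow_exp _ _ e_E); rewrite expnSr.
  by apply: leq_mul; [apply: pow_base | ]; lia.
have t2 : k.-1 * n.+1 <= x ^ E.
  apply: leq_trans (pow_exp 2 _ _); last by rewrite /E; lia.
  by rewrite expnS expn1; apply: leq_mul; lia.
have t4 : t * t * n.+1 * (n ^ K * t ^ K) <= x ^ E.
  apply: leq_trans (pow_exp (3 + (K + K)) _ _); last by rewrite /E; lia.
  rewrite !expnD !expnS expn0 muln1.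
  apply: leq_mul; last by apply: leq_mul; apply: pow_base; lia.
  by rewrite mulnC; apply: leq_mul; [|apply: leq_mul]; lia.
have t1 : n ^ a * c1 <= x ^ E by apply: term; rewrite /E; lia.
have t3 : n ^ b * c2 <= x ^ E by apply: term; rewrite /E; lia.
rewrite (_ : _ + 4 = E.+1) ?expnS; last by rewrite /E; lia.
apply: (@leq_trans (4 * x ^ E)); last by rewrite leq_mul2r x_ge4 orbT.
lia.
Qed.

Theorem mainTheorem5 (k : nat) (hk : 1 <= k)
  (T1 : finType) (le1 : rel T1) (h1 : is_partial_order le1)
  (T2 : finType) (le2 : rel T2) (h2 : is_partial_order le2) :
  exists c : nat, forall t : nat, 2 <= t ->
    exists N : nat, forall n : nat, N <= n ->
      embeds (star_le le1 (star_le (@antichain_le k) le2)) n t ->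
      sat_star (star_le le1 (star_le (@antichain_le k) le2)) n t
        <= (n * t ^ 2) ^ c.
Proof.
pose s := #|ground T1| + #|ground T2| + 1; pose K := k + 2 * s.
exists (#|ground T1| + #|ground T2| + 2 * K + 4) => -[//|tp] t_ge2.
exists (rank_bound T1 + rank_bound T2 + #|T1| + #|T2| + k + 2) => n n_big _.
have X1 := card_ground T1; have X2 := card_ground T2.
have [tp_gt0 s_gt0 k_n] : [/\ 0 < tp, 0 < s & k <= n] by split; lia.
have [R1_s R2_s R_n] :
    [/\ rank_bound T1 < s, rank_bound T2 < s & rank_bound T1 + rank_bound T2 < n].
  by split; lia.
have G_free := Gset_free h1 h2 tp_gt0 hk R1_s R2_s R_n.
have [|F F_sat F_card] := exists_saturated G_free (Z := near_steps n tp K).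
  move=> g; rewrite in_setU negb_or => /andP [_ g_far].
  have [m /and3P [m_n lower_m upper_m]] := exists_good_cut s_gt0 k_n g_far.
  by apply: (saturating_copy (m := m)) => //; rewrite /s; lia.
apply: leq_trans (sat_star_leq F_sat) (leq_trans F_card _).
apply: leq_trans (leq_card_subsetU4 (subxx _)) _.
apply: leq_trans (size_bound #|ground T1| #|ground T2| K (_ : 2 <= n) t_ge2
                    (_ : #|T1| <= n) (_ : #|T2| <= n) k_n); try lia.
by rewrite !leq_add ?card_Lset ?card_Cset ?card_Uset ?card_near_steps //; lia.
Qed.
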